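(* For every $n\in\mathbb{N}$, all nonempty chains $c_k,c_s$ over $[n]$ and all formulas $\varphi,\psi$: (i) if $c_s$ is a subchain of $c_k$, then $\vdash_{(n)}\neg_{c_k}\varphi\to_{(n)}(\neg_{c_s}\psi\to_{(n)}(\varphi\to_{(n)}\psi))$; (ii) if $c_k$ is a subchain of $c_s$, then $\vdash_{(n)}\neg_{c_k}\varphi\to_{(n)}(\neg_{c_s}\psi\to_{(n)}\neg_{c_k\otimes c_s}(\varphi\to_{(n)}\psi))$; (iii) if $c_k$ and $c_s$ have no symbols in common, then $\vdash_{(n)}\neg_{c_k}\varphi\to_{(n)}(\neg_{c_s}\psi\to_{(n)}\neg_{c_s}(\varphi\to_{(n)}\psi))$.
   Context: Fix $n\in\mathbb{N}$, $n\ge 1$, and write $[n]=\{1,\dots,n\}$. Chains: a chain over $[n]$ is a finite sequence of distinct elements of $[n]$; chains with the same length and the same symbols are identified, so a chain is effectively a subset of $[n]$. $c_k$ denotes a chain with $k$ symbols, $\epsilon$ the empty chain, and $(n)$ the chain consisting of all symbols of $[n]$. For chains $c,d$: the concatenation $c\cdot d$ is the chain of symbols occurring in $c$ or in $d$; the coconcatenation $c\otimes d$ is the chain of symbols occurring in exactly one of $c,d$; $d$ is a subchain of $c$ if every symbol of $d$ is a symbol of $c$. The complementary chain $c'_{n-k}$ of $c_k$ is the chain of the symbols of $[n]$ not occurring in $c_k$. Language of $\mathbf{CPN}_n$: a countable set $P_n$ of propositional letters; constants $\perp_c$ for each chain $c$ over $[n]$ with $1\le |c|\le n-1$, and constants $\perp_{(n)}$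 (contradiction) and $\top_{(n)}$ (truth); a unary connective $\neg_c$ for each nonempty chain $c$ over $[n]$ ($\neg_{(n)}$ is the strong negation; the $\neg_c$ with $|c|\le n-1$ are weak negations); a binary connective $\to_{(n)}$. Formulas: propositional letters and constants are formulas; if $\varphi,\psi$ are formulas then so are $\neg_c\varphi$ and $(\varphi\to_{(n)}\psi)$. Conventions: $\neg_\epsilon\varphi:=\varphi$, $\perp_\epsilon:=\top_{(n)}$, and $\perp_c$ for $c=(n)$ means $\perp_{(n)}$. Abbreviations: $\varphi\wedge_{(n)}\psi:=\neg_{(n)}(\varphi\to_{(n)}\neg_{(n)}\psi)$, $\varphi\vee_{(n)}\psi:=\neg_{(n)}\varphi\to_{(n)}\psi$, $\varphi\leftrightarrow_{(n)}\psi:=(\varphi\to_{(n)}\psi)\wedge_{(n)}(\psi\to_{(n)}\varphi)$. Axioms of $\mathbf{CPN}_n$, for all formulas $\varphi,\psi,\chi$ and all nonempty chains $c_k,c_r$ over $[n]$: (A1) $\varphi\to_{(n)}(\psi\to_{(n)}\varphi)$; (A2) $(\varphi\to_{(n)}(\psi\to_{(n)}\chi))\to_{(n)}((\varphi\to_{(n)}\psi)\to_{(n)}(\varphi\to_{(n)}\chi))$; (A3) $(\neg_{(n)}\psi\to_{(n)}\neg_{(n)}\varphi)\to_{(n)}((\neg_{(n)}\psi\to_{(n)}\varphi)\to_{(n)}\psi)$; (A4) $\varphi\to_{(n)}(\perp_{c_k}\to_{(n)}\neg_{c_k}\varphi)$; (A5) $\neg_{c_k}\neg_{c_r}\varphi\leftrightarrow_{(n)}\neg_{c_k\otimes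 c_r}\varphi$; (A6) $\neg_{c_k}\perp_{c_r}\leftrightarrow_{(n)}\perp_{c_k\otimes c_r}$; (A7) $\perp_{c_k}\to_{(n)}\perp_{c_r}$, whenever $c_r$ is a subchain of $c_k$. The only rule of inference is modus ponens (from $\varphi$ and $\varphi\to_{(n)}\psi$ infer $\psi$). For a set $\Sigma$ of formulas, $\Sigma\vdash_{(n)}\varphi$ means there is a finite sequence of formulas ending with $\varphi$, each of which is an axiom, a member of $\Sigma$, or obtained from two earlier members by modus ponens; $\vdash_{(n)}\varphi$ means $\emptyset\vdash_{(n)}\varphi$. *)

(* Chains over [n] are identified with subsets of 'I_n. *)
From mathcomp Require Import all_boot.
Set Implicit Arguments. Unset Strict Implicit. Unset Printing Implicit Defensive.

Section CPN.
Variable n : nat.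

Definition chain := {set 'I_n}.
Definition nechain := {c : chain | c != set0}.

(* Formulas of CPN_n.  Constants: Bot c for every chain c, where
   Bot set0 = top_(n), Bot setT = perp_(n), other c = perp_c. *)
Inductive form : Type :=
| Var of nat
| Bot of chain
| Neg of nechain & form
| Imp of form & form.

Definition negc (c : chain) (p : form) : form :=
  match insub c with Some c' => Neg c' p | None => p end.

Definition coconc (c d : chain) : chain := (c :\: d) :|: (d :\: c).

Definition sneg (p : form) : form := negc setT p.
Definition fand (p q : form) : form := sneg (Imp p (sneg q)).
Definition for_ (p q : form) : form := Imp (sneg p) q.
Definition fiff (p q : form) : form := fand (Imp p q) (Imp q p).

Inductive axiom : form -> Prop :=
| A1 p q : axiom (Imp p (Imp q p))
| A2 p q r : axiom (Imp (Imp p (Imp q r)) (Imp (Imp p q) (Imp p r)))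
| A3 p q : axiom (Imp (Imp (sneg q) (sneg p)) (Imp (Imp (sneg q) p) q))
| A4 p (ck : chain) : ck != set0 -> axiom (Imp p (Imp (Bot ck) (negc ck p)))
| A5 p (ck cr : chain) : ck != set0 -> cr != set0 ->
    axiom (fiff (negc ck (negc cr p)) (negc (coconc ck cr) p))
| A6 (ck cr : chain) : ck != set0 -> cr != set0 ->
    axiom (fiff (negc ck (Bot cr)) (Bot (coconc ck cr)))
| A7 (ck cr : chain) : ck != set0 -> cr != set0 -> cr \subset ck ->
    axiom (Imp (Bot ck) (Bot cr)).

Inductive derivable (Sigma : form -> Prop) : form -> Prop :=
| d_ax p : axiom p -> derivable Sigma p
| d_hyp p : Sigma p -> derivable Sigma p
| d_mp p q : derivable Sigma p -> derivable Sigma (Imp p q) -> derivable Sigma q.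

Definition provable (p : form) : Prop := derivable (fun _ => False) p.

End CPN.

From mathcomp Require Import all_boot.
Set Implicit Arguments. Unset Strict Implicit. Unset Printing Implicit Defensive.

(* Every weak negation [negc c X] is controlled by the constant [Bot c]: when
   [Bot c] holds, [negc c X] is equivalent to [X] (A4, and A5 with c ⊗ c = ε);
   when [sneg (Bot c)] holds, [negc c X] is equivalent to [sneg X] (A5, A6 with
   the full chain).  Inside the deduction theorem one therefore splits on
   [Bot ck] and [Bot cs]; A6 and A7 transport these constants along the chain
   inclusions of each case, and every case reduces to classical reasoning about
   [phi], [psi] and [Imp phi psi]. *)

Definition addhyp n (S : form n -> Prop) (p : form n) : form n -> Prop :=
  fun q => S q \/ q = p.

Ltac hyp := apply: d_hyp; rewrite /addhyp; repeat first [by right | left].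

Section Derivations.
Variable n : nat.
Implicit Types (S : form n -> Prop) (p q r X : form n) (c d : chain n).

Lemma dax S p : axiom p -> derivable S p.
Proof. exact: d_ax. Qed.

Lemma dmp S p q : derivable S (Imp p q) -> derivable S p -> derivable S q.
Proof. by move=> hpq hp; apply: d_mp hp hpq. Qed.

Lemma imp_refl S p : derivable S (Imp p p).
Proof.
apply: dmp (dax _ (A1 p p)).
apply: dmp (dax _ (A1 p (Imp p p))).
exact: dax _ (A2 p (Imp p p) p).
Qed.

Lemma deduction S p q : derivable (addhyp S p) q -> derivable S (Imp p q).
Proof.
elim=> [r ar | r [hr | ->] | r s _ ihr _ ihrs].
- exact: dmp (dax _ (A1 r p)) (dax _ ar).
- exact: dmp (dax _ (A1 r p)) (d_hyp hr).
- exact: imp_refl.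
- exact: dmp (dmp (dax _ (A2 p r s)) ihrs) ihr.
Qed.

Lemma derivable_addhyp S p q : derivable S q -> derivable (addhyp S p) q.
Proof.
elim=> [r ar | r hr | r s _ hr _ hrs]; first exact: d_ax.
- by apply: d_hyp; left.
- exact: d_mp hr hrs.
Qed.

Lemma derivable_hyp S p : derivable (addhyp S p) p.
Proof. by apply: d_hyp; right. Qed.

Lemma imp_const S p q : derivable S q -> derivable S (Imp p q).
Proof. exact: dmp (dax _ (A1 q p)). Qed.

Lemma ex_falso S p q : derivable S p -> derivable S (sneg p) -> derivable S q.
Proof.
move=> hp hnp.
exact: dmp (dmp (dax _ (A3 p q)) (imp_const _ hnp)) (imp_const _ hp).
Qed.

Lemma reductio S p q :
    derivable (addhyp S (sneg q)) p -> derivable (addhyp S (sneg q)) (sneg p) ->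
  derivable S q.
Proof. by move=> hp hnp; apply: dmp (dmp (dax _ (A3 p q)) (deduction hnp)) (deduction hp). Qed.

Lemma sneg2_elim S q : derivable S (sneg (sneg q)) -> derivable S q.
Proof.
move=> h; apply: (@reductio _ (sneg q)); first exact: derivable_hyp.
exact: derivable_addhyp.
Qed.

Lemma sneg_intro S p r :
    derivable (addhyp S p) r -> derivable (addhyp S p) (sneg r) ->
  derivable S (sneg p).
Proof.
move=> hr hnr; apply: (@reductio _ r).
- exact: dmp (derivable_addhyp _ (deduction hr)) (sneg2_elim (derivable_hyp _ _)).
- exact: dmp (derivable_addhyp _ (deduction hnr)) (sneg2_elim (derivable_hyp _ _)).
Qed.

Lemma derivable_cases S p q :
  derivable (addhyp S p) q -> derivable (addhyp S (sneg p)) q -> derivable S q.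
Proof.
move=> /deduction hpq /deduction hnpq.
apply: (@reductio _ q); last exact: derivable_hyp.
apply: dmp (derivable_addhyp _ hnpq) _.
apply: (@sneg_intro _ _ q); last by hyp.
exact: dmp (derivable_addhyp _ (derivable_addhyp _ hpq)) (derivable_hyp _ _).
Qed.

Lemma imp_sneg S p q : derivable S (sneg p) -> derivable S (Imp p q).
Proof.
move=> hnp; apply: deduction.
exact: ex_falso (derivable_hyp _ _) (derivable_addhyp _ hnp).
Qed.

Lemma sneg_imp S p q :
  derivable S p -> derivable S (sneg q) -> derivable S (sneg (Imp p q)).
Proof.
move=> hp hnq; apply: (@sneg_intro _ _ q); last exact: derivable_addhyp.
exact: dmp (derivable_hyp _ _) (derivable_addhyp _ hp).
Qed.

Lemma fandEl S p q : derivable S (fand p q) -> derivable S p.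
Proof.
move=> h; apply: (@reductio _ (Imp p (sneg q))); last exact: derivable_addhyp.
by apply: imp_sneg; apply: derivable_hyp.
Qed.

Lemma fandEr S p q : derivable S (fand p q) -> derivable S q.
Proof.
move=> h; apply: (@reductio _ (Imp p (sneg q))); last exact: derivable_addhyp.
exact: imp_const (derivable_hyp _ _).
Qed.

Lemma fiffEl S p q : derivable S (fiff p q) -> derivable S (Imp p q).
Proof. exact: fandEl. Qed.

Lemma fiffEr S p q : derivable S (fiff p q) -> derivable S (Imp q p).
Proof. exact: fandEr. Qed.

Lemma negc0 p : negc set0 p = p.
Proof. by rewrite /negc insubN ?eqxx. Qed.

Lemma coconcc c : coconc c c = set0.
Proof. by rewrite /coconc setDv setU0. Qed.

Lemma coconcTc c : coconc setT c = ~: c.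
Proof. by apply/setP => x; rewrite /coconc !inE; case: (x \in c). Qed.

Lemma coconc_subset c d : c \subset d -> coconc c d = d :\: c.
Proof. by rewrite -setD_eq0 /coconc => /eqP ->; rewrite set0U. Qed.

Lemma coconc_setD c d : c \subset d -> coconc c (d :\: c) = d.
Proof.
move=> /subsetP cd; apply/setP => x; rewrite /coconc !inE.
by have := cd x; case: (x \in c); case: (x \in d) => // ->.
Qed.

Lemma Bot_subset S c d :
  c != set0 -> d != set0 -> d \subset c -> derivable S (Bot c) -> derivable S (Bot d).
Proof. by move=> hc hd hdc; apply: dmp (dax _ (A7 hc hd hdc)). Qed.

(* The hypothesis on [Bot c] is only needed for a nonempty chain, as
   [negc set0 X] is [X] itself. *)
Lemma negcI S c X :
  (c != set0 -> derivable S (Bot c)) -> derivable S X -> derivable S (negc c X).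
Proof.
move=> hB hX; have [->|hc] := eqVneq c set0; first by rewrite negc0.
exact: dmp (dmp (dax _ (A4 X hc)) hX) (hB hc).
Qed.

Lemma negcE S c X : derivable S (Bot c) -> derivable S (negc c X) -> derivable S X.
Proof.
move=> hB hX; have [c0|hc] := eqVneq c set0; first by rewrite c0 negc0 in hX.
have hcc := fiffEl (dax S (A5 X hc hc)); rewrite coconcc negc0 in hcc.
exact: dmp hcc (negcI (fun=> hB) hX).
Qed.

Lemma Bot_coconc S c d :
    c != set0 -> d != set0 ->
    derivable S (Bot c) -> derivable S (Bot d) ->
  derivable S (Bot (coconc c d)).
Proof.
move=> hc hd hBc hBd; apply: dmp (fiffEl (dax _ (A6 hc hd))) _.
exact: negcI (fun=> hBc) hBd.
Qed.

Section FullChain.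
Hypothesis n_gt0 : 0 < n.

Lemma setT_neq0 : (setT : chain n) != set0.
Proof. by apply/set0Pn; exists (Ordinal n_gt0); rewrite inE. Qed.

Lemma sneg_Bot S c :
  c != set0 -> derivable S (sneg (Bot c)) -> derivable S (Bot (coconc setT c)).
Proof. by move=> hc; apply: dmp (fiffEl (dax _ (A6 setT_neq0 hc))). Qed.

Lemma negc_snegE S c X :
    c != set0 -> derivable S (sneg (Bot c)) -> derivable S (negc c X) ->
  derivable S (sneg X).
Proof.
move=> hc /(sneg_Bot hc) hB hX.
apply: (@sneg_intro _ _ (negc c X)); first exact: derivable_addhyp.
apply: dmp (fiffEr (dax _ (A5 X setT_neq0 hc))) _.
by apply: negcI (fun=> derivable_addhyp _ hB) (derivable_hyp _ _).
Qed.

Lemma negc_snegI S c X :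
    c != set0 -> derivable S (sneg (Bot c)) -> derivable S (sneg X) ->
  derivable S (negc c X).
Proof.
move=> hc /(sneg_Bot hc) hB hnX.
apply: (@reductio _ X); last exact: derivable_addhyp.
apply: negcE (derivable_addhyp _ hB) _.
exact: dmp (fiffEl (dax _ (A5 X setT_neq0 hc))) (derivable_hyp _ _).
Qed.

Lemma Bot_setC S c d :
    c != set0 -> d != set0 -> d \subset ~: c ->
  derivable S (sneg (Bot c)) -> derivable S (Bot d).
Proof.
move=> hc hd hdc /(sneg_Bot hc); rewrite coconcTc; apply: (Bot_subset _ hd hdc).
by apply: contraNneq hd => c0; rewrite -subset0 -c0.
Qed.

Variables (ck cs : chain n) (phi psi : form n).
Hypotheses (ck_neq0 : ck != set0) (cs_neq0 : cs != set0).

Let Gamma : form n -> Prop :=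
  addhyp (addhyp (fun=> False) (negc ck phi)) (negc cs psi).

Lemma negc_imp_subset :
  cs \subset ck -> provable (Imp (negc ck phi) (Imp (negc cs psi) (Imp phi psi))).
Proof.
move=> cs_ck; do 3 apply: deduction.
apply: (@derivable_cases _ (Bot ck)).
- apply: negcE (Bot_subset ck_neq0 cs_neq0 cs_ck (derivable_hyp _ _)) _; hyp.
- apply: (@ex_falso _ phi); first by hyp.
  by apply: (negc_snegE ck_neq0 (derivable_hyp _ _)); hyp.
Qed.

Lemma negc_imp_superset :
    ck \subset cs ->
  provable (Imp (negc ck phi) (Imp (negc cs psi) (negc (coconc ck cs) (Imp phi psi)))).
Proof.
move=> ck_cs; do 2 apply: deduction; fold Gamma.
rewrite coconc_subset //; set d := cs :\: ck.
have d_cs : d \subset cs := subsetDl cs ck.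
have d_ck : d \subset ~: ck by rewrite /d setDE subsetIr.
apply: (@derivable_cases _ (Bot cs)).
  have hpsi : derivable (addhyp Gamma (Bot cs)) psi.
    by apply: negcE (derivable_hyp _ _) _; hyp.
  apply: negcI (fun hd => Bot_subset cs_neq0 hd d_cs (derivable_hyp _ _)) _.
  exact: imp_const.
apply: (@derivable_cases _ (Bot ck)); last first.
  have hnphi : derivable (addhyp (addhyp Gamma (sneg (Bot cs))) (sneg (Bot ck)))
      (sneg phi).
    by apply: (negc_snegE ck_neq0 (derivable_hyp _ _)); hyp.
  apply: negcI (fun hd => Bot_setC ck_neq0 hd d_ck (derivable_hyp _ _)) _.
  exact: imp_sneg.
set Delta := addhyp (addhyp Gamma _) _.
have hphi : derivable Delta phi by apply: negcE (derivable_hyp _ _) _; hyp.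
have hnpsi : derivable Delta (sneg psi).
  by apply: (negc_snegE cs_neq0); hyp.
have [d0|hd] := eqVneq d set0.
  (* then [ck = cs], and the two cases on the constants contradict each other *)
  have ck_eq : ck = cs by rewrite -(coconc_setD ck_cs) -/d d0 /coconc setD0 set0D setU0.
  by apply: (@ex_falso _ (Bot cs)); [rewrite -ck_eq; apply: derivable_hyp | hyp].
apply: (negc_snegI hd _ (sneg_imp hphi hnpsi)).
apply: (@sneg_intro _ _ (Bot cs)); last by hyp.
rewrite -(coconc_setD ck_cs).
by apply: Bot_coconc ck_neq0 hd _ (derivable_hyp _ _); hyp.
Qed.

Lemma negc_imp_disjoint :
    [disjoint ck & cs] ->
  provable (Imp (negc ck phi) (Imp (negc cs psi) (negc cs (Imp phi psi)))).
Proof.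
rewrite disjoint_sym disjoints_subset => cs_ck; do 2 apply: deduction; fold Gamma.
apply: (@derivable_cases _ (Bot ck)); last first.
  have hnphi : derivable (addhyp Gamma (sneg (Bot ck))) (sneg phi).
    by apply: (negc_snegE ck_neq0 (derivable_hyp _ _)); hyp.
  apply: negcI (fun=> Bot_setC ck_neq0 cs_neq0 cs_ck (derivable_hyp _ _)) _.
  exact: imp_sneg.
have hphi : derivable (addhyp Gamma (Bot ck)) phi.
  by apply: negcE (derivable_hyp _ _) _; hyp.
apply: (@derivable_cases _ (Bot cs)).
- apply: negcI (fun=> derivable_hyp _ _) _; apply: imp_const.
  by apply: negcE (derivable_hyp _ _) _; hyp.
- apply: (negc_snegI cs_neq0 (derivable_hyp _ _)).
  apply: sneg_imp; first exact: derivable_addhyp.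
  by apply: (negc_snegE cs_neq0 (derivable_hyp _ _)); hyp.
Qed.

End FullChain.
End Derivations.

Theorem mainTheorem8 (n : nat) (hn : 0 < n) (ck cs : chain n)
    (hk : ck != set0) (hs : cs != set0) (phi psi : form n) :
  [/\ cs \subset ck ->
        provable (Imp (negc ck phi) (Imp (negc cs psi) (Imp phi psi))),
      ck \subset cs ->
        provable (Imp (negc ck phi) (Imp (negc cs psi)
                   (negc (coconc ck cs) (Imp phi psi))))
    & [disjoint ck & cs] ->
        provable (Imp (negc ck phi) (Imp (negc cs psi) (negc cs (Imp phi psi))))].
Proof.
split.
- exact: negc_imp_subset.
- exact: negc_imp_superset.
- exact: negc_imp_disjoint.
Qed.
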